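(* Let $(u_1,\dots,u_k)$ be a tuple of linearly independent pairwise orthogonal vectors of $\mathbb{C}^n$. Then for every $\epsilon>0$ there is a tuple $(v_1(\epsilon),\dots,v_k(\epsilon))$ of pairwise orthogonal vectors of $\mathbb{C}^n$ with $\langle v_j(\epsilon),v_j(\epsilon)\rangle\neq 0$ for all $j$, such that $\lim_{\epsilon\to 0}v_j(\epsilon)=u_j$ for all $j=1,\dots,k$.
   Context: $\langle x,y\rangle=\sum_i x_iy_i$ is the bilinear (non-Hermitian) form on $\mathbb{C}^n$, and orthogonality of vectors refers to this form. *)

From Stdlib Require Import Reals.
Open Scope R_scope.

Record Cx : Type := mkC { Cre : R; Cim : R }.

Definition C0 : Cx := mkC 0 0.
Definition Cadd (z w : Cx) : Cx := mkC (Cre z + Cre w) (Cim z + Cim w).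
Definition Csub (z w : Cx) : Cx := mkC (Cre z - Cre w) (Cim z - Cim w).
Definition Cmul (z w : Cx) : Cx :=
  mkC (Cre z * Cre w - Cim z * Cim w) (Cre z * Cim w + Cim z * Cre w).
Definition Cnorm (z : Cx) : R := sqrt (Cre z * Cre z + Cim z * Cim z).

Fixpoint csum (n : nat) (f : nat -> Cx) : Cx :=
  match n with
  | O => C0
  | S m => Cadd (csum m f) (f m)
  end.

(* A vector of Cx^n is a function nat -> Cx, of which only coordinates
   0 .. n-1 are meaningful. *)
(* bilinear (non-Hermitian) form <x,y> = sum_i x_i y_i on Cx^n *)
Definition bform (n : nat) (x y : nat -> Cx) : Cx :=
  csum n (fun i => Cmul (x i) (y i)).

Definition lin_indep (n k : nat) (u : nat -> nat -> Cx) : Prop :=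
  forall c : nat -> Cx,
    (forall i, (i < n)%nat -> csum k (fun j => Cmul (c j) (u j i)) = C0) ->
    forall j, (j < k)%nat -> c j = C0.

Definition pairwise_orth (n k : nat) (u : nat -> nat -> Cx) : Prop :=
  forall j l, (j < k)%nat -> (l < k)%nat -> j <> l -> bform n (u j) (u l) = C0.

Definition lim0 (n : nat) (f : R -> nat -> Cx) (x : nat -> Cx) : Prop :=
  forall delta, delta > 0 -> exists eta, eta > 0 /\
    forall eps, 0 < eps < eta ->
      forall i, (i < n)%nat -> Cnorm (Csub (f eps i) (x i)) < delta.

(* By independence there are dual
   vectors w_l with <u_j, w_l> = delta_jl.  Correcting them by
     wc_l = w_l - 1/2 sum_{m isotropic} <w_m, w_l> u_m
   keeps the duality (the u_m are pairwise orthogonal and the added u_m are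
   isotropic) and makes the wc_j, j isotropic, pairwise orthogonal.  Then
     v_j(t) = u_j + t wc_j  (u_j isotropic),    v_j(t) = u_j  (otherwise)
   are pairwise orthogonal with <v_j, v_j> = 2t or <u_j, u_j>, hence
   non-isotropic for t <> 0, and v_j(eps) -> u_j as eps -> 0. *)

From Stdlib Require Import Reals Lra Lia Psatz.
From mathcomp Require all_boot all_order all_algebra Rstruct complex.
Open Scope R_scope.

Lemma Cnorm_le_l1 (z : Cx) : Cnorm z <= Rabs (Cre z) + Rabs (Cim z).
Proof.
  unfold Cnorm.
  assert (Ha := Rabs_pos (Cre z)); assert (Hb := Rabs_pos (Cim z)).
  rewrite <- (sqrt_square (Rabs (Cre z) + Rabs (Cim z))) by lra.
  apply sqrt_le_1_alt.
  assert (Ea : Cre z * Cre z = Rabs (Cre z) * Rabs (Cre z))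
    by (rewrite <- Rabs_mult, Rabs_pos_eq; nra).
  assert (Eb : Cim z * Cim z = Rabs (Cim z) * Rabs (Cim z))
    by (rewrite <- Rabs_mult, Rabs_pos_eq; nra).
  rewrite Ea, Eb. nra.
Qed.

Lemma Cnorm_shift (x p : Cx) (e : R) : 0 <= e ->
  Cnorm (Csub (Cadd x (Cmul (mkC e 0) p)) x)
    <= e * (Rabs (Cre p) + Rabs (Cim p)).
Proof.
  intros He. eapply Rle_trans; [apply Cnorm_le_l1|]. simpl.
  replace (Cre x + (e * Cre p - 0 * Cim p) - Cre x) with (e * Cre p) by ring.
  replace (Cim x + (e * Cim p + 0 * Cre p) - Cim x) with (e * Cim p) by ring.
  rewrite !Rabs_mult, (Rabs_pos_eq e) by exact He. lra.
Qed.

Fixpoint rsum (n : nat) (f : nat -> R) : R :=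
  match n with O => 0 | S m => rsum m f + f m end.

Lemma rsum_ge0 (n : nat) (f : nat -> R) :
  (forall i, 0 <= f i) -> 0 <= rsum n f.
Proof. intros H; induction n; simpl; [lra | specialize (H n); lra]. Qed.

Lemma rsum_ge_term (n : nat) (f : nat -> R) (i : nat) :
  (forall i, 0 <= f i) -> (i < n)%nat -> f i <= rsum n f.
Proof.
  intros H Hi; induction n as [|n IH]; [lia|]. simpl.
  destruct (Nat.eq_dec i n) as [->|ne].
  - assert (0 <= rsum n f) by (apply rsum_ge0; auto). lra.
  - assert (f i <= rsum n f) by (apply IH; lia). specialize (H n). lra.
Qed.

Lemma perturbation_limit (n : nat) (u p : nat -> Cx) (s : R -> R) :
  (forall eps, 0 < eps -> 0 <= s eps <= eps) ->
  lim0 n (fun eps i => Cadd (u i) (Cmul (mkC (s eps) 0) (p i))) u.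
Proof.
  intros Hs delta Hdelta.
  set (l1 := fun i => Rabs (Cre (p i)) + Rabs (Cim (p i))).
  assert (Hl1 : forall i, 0 <= l1 i).
  { intro i; unfold l1; pose proof (Rabs_pos (Cre (p i)));
      pose proof (Rabs_pos (Cim (p i))); lra. }
  set (S := rsum n l1).
  assert (HS : 0 <= S) by (apply rsum_ge0; auto).
  exists (delta / (S + 1)). split; [apply Rdiv_lt_0_compat; lra|].
  intros eps [Heps Heta] i Hi.
  destruct (Hs eps Heps) as [Hs0 Hs1].
  eapply Rle_lt_trans; [apply Cnorm_shift; exact Hs0|]. fold (l1 i).
  assert (Hli : l1 i <= S) by (apply rsum_ge_term; auto).
  assert (Hbound : eps * (S + 1) < delta).
  { apply (Rmult_lt_compat_r (S + 1)) in Heta; [|lra].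
    unfold Rdiv in Heta. rewrite Rmult_assoc, Rinv_l, Rmult_1_r in Heta by lra.
    exact Heta. }
  pose proof (Hl1 i). nra.
Qed.

Module FormAlgebra.
Import all_boot all_order all_algebra Rstruct complex.
Set Implicit Arguments. Unset Strict Implicit. Unset Printing Implicit Defensive.
Import GRing.Theory Num.Theory.

Section BilinearForm.
Local Open Scope ring_scope.
Variables (F : fieldType) (n : nat).

Definition bf (x y : nat -> F) : F := \sum_(i < n) x i * y i.

Lemma bfC (x y : nat -> F) : bf x y = bf y x.
Proof. by apply: eq_bigr => i _; rewrite mulrC. Qed.

Lemma bf_combl (x y z : nat -> F) (t : F) :
  bf (fun i => x i + t * y i) z = bf x z + t * bf y z.
Proof.
by rewrite /bf mulr_sumr -big_split; apply: eq_bigr => i _; rewrite mulrDl mulrA.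
Qed.

Lemma bf_combr (x y z : nat -> F) (t : F) :
  bf z (fun i => x i + t * y i) = bf z x + t * bf z y.
Proof. by rewrite bfC bf_combl (bfC x) (bfC y). Qed.

Lemma bf_lincombr (k : nat) (x : nat -> F) (c : nat -> F) (z : nat -> nat -> F) :
  bf x (fun i => \sum_(m < k) c m * z m i) = \sum_(m < k) c m * bf x (z m).
Proof.
rewrite /bf; under eq_bigr do rewrite mulr_sumr.
rewrite exchange_big; apply: eq_bigr => m _; rewrite mulr_sumr.
by apply: eq_bigr => i _; rewrite mulrCA.
Qed.

End BilinearForm.

Lemma sum_kronecker (F : fieldType) (k j : nat) (c : nat -> F) : (j < k)%N ->
  (\sum_(m < k) c m * ((m : nat) == j)%:R = c j)%R.
Proof.
move=> Hj; rewrite (bigD1 (Ordinal Hj)) //= eqxx mulr1 big1 ?addr0 // => m.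
by rewrite -val_eqE /= => /negbTE ->; rewrite mulr0.
Qed.

Section IsotropicPerturbation.
Local Open Scope ring_scope.
Variables (F : fieldType) (n k : nat) (u w : nat -> nat -> F).
Hypothesis two_neq0 : (2 : F) != 0.
Hypothesis u_orth : forall j l, (j < k)%N -> (l < k)%N -> j <> l ->
  bf n (u j) (u l) = 0.
Hypothesis uw_dual : forall j l, (j < k)%N -> (l < k)%N ->
  bf n (u j) (w l) = (j == l)%:R.

Definition isotropic (j : nat) : bool := bf n (u j) (u j) == 0.

Definition corr (m l : nat) : F := if isotropic m then bf n (w m) (w l) else 0.

Definition wc (l : nat) : nat -> F :=
  fun i => w l i + (- 2^-1) * \sum_(m < k) corr m l * u m i.

Lemma half_plus_half : (2^-1 + 2^-1 : F) = 1.
Proof. by rewrite -[RHS](mulVf two_neq0) mulr_natr mulr2n. Qed.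

(* The correction only adds isotropic u_m, which are orthogonal to every u_j. *)
Lemma wc_dual j l : (j < k)%N -> (l < k)%N -> bf n (u j) (wc l) = (j == l)%:R.
Proof.
move=> Hj Hl; rewrite /wc bf_combr (bf_lincombr _ _ _ (corr^~ l)) uw_dual //.
rewrite big1 ?mulr0 ?addr0 // => m _.
have [<-|ne] := eqVneq (m : nat) j.
  by rewrite /corr /isotropic; case: eqP => [->|_]; rewrite ?mulr0 ?mul0r.
by rewrite u_orth ?mulr0 //; apply/eqP; rewrite eq_sym.
Qed.

(* On isotropic indices the two halves of the correction cancel <w_j, w_l>. *)
Lemma wc_orth j l : (j < k)%N -> (l < k)%N -> isotropic j -> isotropic l ->
  bf n (wc j) (wc l) = 0.
Proof.
move=> Hj Hl Ij Il.
rewrite {2}/wc bf_combr (bf_lincombr _ _ _ (corr^~ l)).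
under eq_bigr => m _ do rewrite (bfC _ (wc j)) wc_dual ?ltn_ord //.
rewrite (sum_kronecker (corr^~ l) Hj) bfC /wc bf_combr (bf_lincombr _ _ _ (corr^~ j)).
under eq_bigr => m _ do rewrite (bfC _ (w l)) uw_dual ?ltn_ord //.
rewrite (sum_kronecker (corr^~ j) Hl) /corr Ij Il (bfC _ (w l)).
by rewrite -addrA -mulrDl -opprD half_plus_half mulN1r subrr.
Qed.

Definition perturbed (t : F) (j : nat) : nat -> F :=
  fun i => u j i + (if isotropic j then t else 0) * wc j i.

(* Orthogonality survives: cross terms are <u_j, wc_l> = 0 for j <> l, and
   <wc_j, wc_l> only occurs when both indices are isotropic. *)
Lemma perturbed_orth t j l : (j < k)%N -> (l < k)%N -> j <> l ->
  bf n (perturbed t j) (perturbed t l) = 0.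
Proof.
move=> Hj Hl ne.
have /negbTE jl : j != l by apply/eqP.
have /negbTE lj : l != j by apply/eqP => /esym.
rewrite /perturbed bf_combl [bf _ (u j) _]bf_combr [bf _ (wc j) _]bf_combr.
rewrite u_orth // wc_dual // (bfC _ (wc j)) wc_dual //.
rewrite jl lj !mulr0 !add0r.
case: ifP => Ij; last by rewrite !mul0r.
case: ifP => Il; last by rewrite mul0r mulr0.
by rewrite wc_orth // !mulr0.
Qed.

Lemma perturbed_self t j : (j < k)%N ->
  bf n (perturbed t j) (perturbed t j)
  = if isotropic j then t * 2 else bf n (u j) (u j).
Proof.
move=> Hj; rewrite /perturbed bf_combl [bf _ (u j) _]bf_combr.
rewrite [bf _ (wc j) _]bf_combr wc_dual // (bfC _ (wc j)) wc_dual // eqxx.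
case: ifP => Ij; last by rewrite !mul0r !addr0.
by rewrite wc_orth // (eqP Ij) mulr0 addr0 mulr1 add0r mulr_natr mulr2n.
Qed.

Lemma perturbed_nonisotropic t j : t != 0 -> (j < k)%N ->
  bf n (perturbed t j) (perturbed t j) != 0.
Proof.
move=> Ht Hj; rewrite perturbed_self //.
by case: ifP => [_|/negbT //]; rewrite mulf_neq0.
Qed.

End IsotropicPerturbation.

Section DualFamily.
Local Open Scope ring_scope.

Lemma dual_family_exists (F : fieldType) (n k : nat) (u : nat -> nat -> F) :
  (forall c : nat -> F, (forall i, (i < n)%N -> \sum_(j < k) c j * u j i = 0) ->
     forall j, (j < k)%N -> c j = 0) ->
  exists w : nat -> nat -> F, forall j l, (j < k)%N -> (l < k)%N ->
     bf n (u j) (w l) = (j == l)%:R.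
Proof.
move=> Hind.
pose ext (m : nat) (f : 'I_m -> F) (j : nat) : F :=
  if @insub _ _ 'I_m j is Some j' then f j' else 0.
have extE m (f : 'I_m -> F) (j : 'I_m) : ext m f j = f j by rewrite /ext valK.
pose U : 'M[F]_(k, n) := \matrix_(j < k, i < n) u j i.
have : row_free U.
  apply: inj_row_free => c Hc; apply/rowP => j; rewrite mxE -(extE _ (c 0)).
  apply: (Hind (ext k (c 0))); last exact: ltn_ord.
  move=> i Hi; transitivity ((c *m U) 0 (Ordinal Hi)); last by rewrite Hc mxE.
  by rewrite mxE; apply: eq_bigr => j' _; rewrite extE mxE.
case/row_freeP => B HB.
exists (fun l i => ext n (fun i' => ext k (fun l' => B i' l') l) i) => j l Hj Hl.
have -> : ((j == l)%:R = (1%:M : 'M[F]_k) (Ordinal Hj) (Ordinal Hl))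
  by rewrite mxE.
rewrite -HB mxE /bf; apply: eq_bigr => i _.
by rewrite mxE extE (extE _ (fun l' => B i l') (Ordinal Hl)).
Qed.

End DualFamily.

Notation CC := (complex R).

Section Transport.
Local Open Scope ring_scope.

Definition toC (z : Cx) : CC := Complex (Cre z) (Cim z).
Definition ofC (z : CC) : Cx := let: Complex a b := z in mkC a b.
Lemma toCK : cancel toC ofC. Proof. by case. Qed.
Lemma ofCK : cancel ofC toC. Proof. by case. Qed.
Lemma toC_inj : injective toC. Proof. exact: can_inj toCK. Qed.
Lemma toC0 : toC C0 = 0. Proof. by []. Qed.
Lemma toCD z w : toC (Cadd z w) = toC z + toC w. Proof. by []. Qed.
Lemma toCM z w : toC (Cmul z w) = toC z * toC w. Proof. by []. Qed.

Lemma toC_csum n f : toC (csum n f) = \sum_(i < n) toC (f i).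
Proof.
by elim: n => [|n IH]; rewrite ?big_ord0 // big_ord_recr /= toCD IH.
Qed.

Lemma toC_bform n x y :
  toC (bform n x y) = bf n (fun i => toC (x i)) (fun i => toC (y i)).
Proof. by rewrite /bform toC_csum. Qed.

Lemma lin_indep_toC n k u : lin_indep n k u ->
  (forall c : nat -> CC,
     (forall i, (i < n)%N -> \sum_(j < k) c j * toC (u j i) = 0) ->
     forall j, (j < k)%N -> c j = 0).
Proof.
move=> Hind c Hc j Hj; rewrite -(ofCK (c j)).
have -> // : ofC (c j) = C0.
apply: (Hind (fun j => ofC (c j))); last exact/ssrnat.ltP.
move=> i /ssrnat.ltP Hi; apply: toC_inj.
rewrite toC_csum toC0 -[RHS](Hc i Hi); apply: eq_bigr => j' _.
by rewrite toCM ofCK.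
Qed.

Lemma pairwise_orth_toC n k u : pairwise_orth n k u ->
  forall j l, (j < k)%N -> (l < k)%N -> j <> l ->
  bf n (fun i => toC (u j i)) (fun i => toC (u l i)) = 0.
Proof.
move=> Horth j l /ssrnat.ltP Hj /ssrnat.ltP Hl ne.
by rewrite -toC_bform Horth.
Qed.

End Transport.

Theorem orthogonal_perturbation (n k : nat) (u : nat -> nat -> Cx) :
  lin_indep n k u -> pairwise_orth n k u ->
  exists (p : nat -> nat -> Cx) (moved : nat -> bool), forall t : R, t <> 0 ->
    let v := fun j i => Cadd (u j i) (Cmul (mkC (if moved j then t else 0) 0) (p j i)) in
    pairwise_orth n k v /\ (forall j, lt j k -> bform n (v j) (v j) <> C0).
Proof.
move=> Hind Horth.
pose uC j i := toC (u j i).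
have [w Hdual] := @dual_family_exists _ n k uC (lin_indep_toC Hind).
have two_neq0 : ((2 : CC) != 0)%R by rewrite pnatr_eq0.
exists (fun j i => ofC (wc n k uC w j i)), (isotropic n uC) => t Ht v.
have toC_v j l : toC (bform n (v j) (v l))
    = bf n (perturbed n k uC w (toC (mkC t 0)) j) (perturbed n k uC w (toC (mkC t 0)) l).
  rewrite toC_bform; apply: eq_bigr => i _.
  by rewrite !toCD !toCM !ofCK /perturbed; case: ifP; case: ifP.
split.
  move=> j l /ssrnat.ltP Hj /ssrnat.ltP Hl ne; apply: toC_inj.
  by rewrite toC_v toC0 (perturbed_orth two_neq0 (pairwise_orth_toC Horth) Hdual).
move=> j /ssrnat.ltP Hj /(congr1 toC); rewrite toC_v toC0; apply/eqP.
have tC_neq0 : (toC (mkC t 0) != 0)%R.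
  apply/eqP => /(congr1 (fun z : CC => let: Complex a _ := z in a)) /= t0.
  exact: Ht t0.
exact: (perturbed_nonisotropic two_neq0 (pairwise_orth_toC Horth) Hdual tC_neq0 Hj).
Qed.

End FormAlgebra.

Theorem lemma22 (n k : nat) (u : nat -> nat -> Cx)
  (Hind : lin_indep n k u) (Horth : pairwise_orth n k u) :
  exists v : R -> nat -> nat -> Cx,
    (forall eps, eps > 0 ->
       pairwise_orth n k (v eps) /\
       (forall j, (j < k)%nat -> bform n (v eps j) (v eps j) <> C0)) /\
    (forall j, (j < k)%nat -> lim0 n (fun eps => v eps j) (u j)).
Proof.
  destruct (FormAlgebra.orthogonal_perturbation Hind Horth) as [p [moved Hv]].
  exists (fun eps j i =>
    Cadd (u j i) (Cmul (mkC (if moved j then eps else 0) 0) (p j i))).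
  split.
  - intros eps Heps. apply Hv. lra.
  - intros j Hj. apply perturbation_limit.
    intros eps Heps. destruct (moved j); lra.
Qed.
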